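(* Consider the dynamic panel logit AR(1) model with $T=3$: $(Y_0,X,A)$ has an arbitrary joint distribution with $Y_0\in\{0,1\}$, $X=(X_1,X_2,X_3)\in\mathbb{R}^{K\times 3}$, $A\in\mathbb{R}$, and conditionally on $(Y_0,X,A)$ the outcomes $Y=(Y_1,Y_2,Y_3)\in\{0,1\}^3$ satisfy, for $t\in\{1,2,3\}$, $$\Pr(Y_t=1\mid Y_0,\dots,Y_{t-1},X,A)=\frac{\exp(X_t'\beta_0+Y_{t-1}\gamma_0+A)}{1+\exp(X_t'\beta_0+Y_{t-1}\gamma_0+A)}$$ with true parameters $\beta_0\in\mathbb{R}^K$, $\gamma_0\in\mathbb{R}$. Let $x_{ts}=x_t-x_s$ and define the moment functions $$m_0^{(a)}(y,x,\beta,\gamma)=\begin{cases}\exp(x_{12}'\beta)&y=(0,1,0),\\ \exp(x_{13}'\beta-\gamma)&y=(0,1,1),\\ -1&(y_1,y_2)=(1,0),\\ \exp(x_{32}'\beta)-1&y=(1,1,0),\\0&\text{otherwise},\end{cases}\qquad m_0^{(b)}(y,x,\beta,\gamma)=\begin{cases}\exp(x_{23}'\beta)-1&y=(0,0,1),\\ -1&(y_1,y_2)=(0,1),\\ \exp(x_{31}'\beta)&y=(1,0,0),\\ \exp(\gamma+x_{21}'\beta)&y=(1,0,1),\\0&\text{otherwise},\end{cases}$$ $$m_1^{(a)}(y,x,\beta,\gamma)=\begin{cases}\exp(x_{12}'\beta+\gamma)&y=(0,1,0),\\ \exp(x_{13}'\beta)&y=(0,1,1),\\ -1&(y_1,y_2)=(1,0),\\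 \exp(x_{32}'\beta)-1&y=(1,1,0),\\0&\text{otherwise},\end{cases}\qquad m_1^{(b)}(y,x,\beta,\gamma)=\begin{cases}\exp(x_{23}'\beta)-1&y=(0,0,1),\\ -1&(y_1,y_2)=(0,1),\\ \exp(x_{31}'\beta-\gamma)&y=(1,0,0),\\ \exp(x_{21}'\beta)&y=(1,0,1),\\0&\text{otherwise}.\end{cases}$$ For $k\in\{1,\dots,K\}$ let $\mathcal{X}_{k,+}=\{x\in\mathbb{R}^{K\times3}: x_{k,1}\le x_{k,3}<x_{k,2}\text{ or }x_{k,1}<x_{k,3}\le x_{k,2}\}$ and $\mathcal{X}_{k,-}=\{x\in\mathbb{R}^{K\times3}: x_{k,1}\ge x_{k,3}>x_{k,2}\text{ or }x_{k,1}>x_{k,3}\ge x_{k,2}\}$, where $x_{k,t}$ is the $k$-th component of $x_t$; for $s\in\{-,+\}^K$ let $\mathcal{X}_s=\bigcap_{k=1}^K\mathcal{X}_{k,s_k}$, and let $\overline m^{(\xi)}_{y_0,s}(\beta,\gamma)=\mathbb{E}[m^{(\xi)}_{y_0}(Y,X,\beta,\gamma)\mid Y_0=y_0,X\in\mathcal{X}_s]$. Let $y_0\in\{0,1\}$ and $\xi\in\{a,b\}$, and assume that for all $s\in\{-,+\}^K$, $\Pr(Y_0=y_0,X\in\mathcal{X}_s)>0$ and $\overline m^{(\xi)}_{y_0,s}(\beta,\gamma)$ is well-defined. Then the solution $(\beta,\gamma)\in\mathbb{R}^K\times\mathbb{R}$ of $\overline m^{(\xi)}_{y_0,s}(\beta,\gamma)=0$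 for all $s\in\{-,+\}^K$ is unique and equals $(\beta_0,\gamma_0)$; that is, $\beta_0$ and $\gamma_0$ are point-identified.
   Context: Expectations are taken under the true data distribution (generated with $\beta_0,\gamma_0$), while the moment functions are evaluated at an arbitrary candidate $(\beta,\gamma)$. *)

From HB Require Import structures.
From mathcomp Require Import all_boot all_order all_algebra.
From mathcomp Require Import all_classical all_reals all_analysis.
Set Implicit Arguments. Unset Strict Implicit. Unset Printing Implicit Defensive.
Import Order.TTheory GRing.Theory Num.Theory.
Local Open Scope classical_set_scope.
Local Open Scope ring_scope.

Section Model.
Variable R : realType.
Variable K : nat.

(* periods 1,2,3 are the columns 0,1,2 of x : 'M_(K,3) *)
Definition p1 : 'I_3 := @Ordinal 3 0 isT.
Definition p2 : 'I_3 := @Ordinal 3 1 isT.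
Definition p3 : 'I_3 := @Ordinal 3 2 isT.

Definition xb (x : 'M[R]_(K,3)) (t : 'I_3) (beta : 'rV[R]_K) : R :=
  \sum_(k < K) x k t * beta 0 k.

Definition b2r (b : bool) : R := if b then 1 else 0.

Definition logistic (z : R) : R := expR z / (1 + expR z).

Definition pt (v : R) (yt : bool) : R :=
  if yt then logistic v else 1 - logistic v.

Definition condprob (beta0 : 'rV[R]_K) (gamma0 : R) (y0 : bool)
  (x : 'M[R]_(K,3)) (a : R) (y1 y2 y3 : bool) : R :=
  pt (xb x p1 beta0 + b2r y0 * gamma0 + a) y1 *
  pt (xb x p2 beta0 + b2r y1 * gamma0 + a) y2 *
  pt (xb x p3 beta0 + b2r y2 * gamma0 + a) y3.

Inductive xi_t := Xi_a | Xi_b.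

Definition moment (y0 : bool) (xi : xi_t) (y1 y2 y3 : bool)
  (x : 'M[R]_(K,3)) (beta : 'rV[R]_K) (gamma : R) : R :=
  let b1 := xb x p1 beta in let b2 := xb x p2 beta in let b3 := xb x p3 beta in
  match y0, xi with
  | false, Xi_a =>
      match y1, y2, y3 with
      | false, true, false => expR (b1 - b2)
      | false, true, true => expR (b1 - b3 - gamma)
      | true, false, _ => -1
      | true, true, false => expR (b3 - b2) - 1
      | _, _, _ => 0
      end
  | false, Xi_b =>
      match y1, y2, y3 with
      | false, false, true => expR (b2 - b3) - 1
      | false, true, _ => -1
      | true, false, false => expR (b3 - b1)
      | true, false, true => expR (gamma + (b2 - b1))
      | _, _, _ => 0
      end
  | true, Xi_a =>
      match y1, y2, y3 with
      | false, true, false => expR (b1 - b2 + gamma)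
      | false, true, true => expR (b1 - b3)
      | true, false, _ => -1
      | true, true, false => expR (b3 - b2) - 1
      | _, _, _ => 0
      end
  | true, Xi_b =>
      match y1, y2, y3 with
      | false, false, true => expR (b2 - b3) - 1
      | false, true, _ => -1
      | true, false, false => expR (b3 - b1 - gamma)
      | true, false, true => expR (b2 - b1)
      | _, _, _ => 0
      end
  end.

Definition Xplus (k : 'I_K) (x : 'M[R]_(K,3)) : Prop :=
  (x k p1 <= x k p3 < x k p2) \/ (x k p1 < x k p3 <= x k p2).
Definition Xminus (k : 'I_K) (x : 'M[R]_(K,3)) : Prop :=
  (x k p2 < x k p3 <= x k p1) \/ (x k p2 <= x k p3 < x k p1).

(* X_s, with s k = true meaning sign + *)
Definition Xs (s : 'I_K -> bool) : set 'M[R]_(K,3) :=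
  [set x | forall k, if s k then Xplus k x else Xminus k x].

Section Prob.
Variables (d : measure_display) (Omega : measurableType d).
Variables (P : probability Omega R).
Variables (Y0 : Omega -> bool) (X : Omega -> 'M[R]_(K,3)) (A : Omega -> R).
Variables (beta0 : 'rV[R]_K) (gamma0 : R).

Definition event (y0 : bool) (s : 'I_K -> bool) : set Omega :=
  [set w | Y0 w = y0 /\ Xs s (X w)].

Definition cond_moment (y0 : bool) (xi : xi_t) (beta : 'rV[R]_K) (gamma : R)
  (w : Omega) : R :=
  \sum_(y1 : bool) \sum_(y2 : bool) \sum_(y3 : bool)
    condprob beta0 gamma0 (Y0 w) (X w) (A w) y1 y2 y3 *
    moment y0 xi y1 y2 y3 (X w) beta gamma.

Definition mbar (y0 : bool) (xi : xi_t) (s : 'I_K -> bool)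
  (beta : 'rV[R]_K) (gamma : R) : R :=
  fine (\int[P]_(w in event y0 s) (cond_moment y0 xi beta gamma w)%:E) /
  fine (P (event y0 s)).

End Prob.
End Model.

(* At the true parameter the conditional moment vanishes for every (x, a).
Elsewhere, its difference from that value is a positive combination of
differences exp(e_i(beta, gamma)) - exp(e_i(beta0, gamma0)) over three
outcomes, whose exponent shifts are x_ts'(beta - beta0), with +-(gamma - gamma0)
added to one of them. On X_s, with s the sign pattern of +-(beta - beta0), the
shifts x_12'd, x_13'd, x_32'd all have the same sign, x_12'd strictly if
d <> 0. Choosing the sign that agrees with the gamma shift moves all three
exponents the same way, one of them strictly, so the conditional moment has a
constant strict sign on X_s, and so does its expectation over the event. *)

From HB Require Import structures.
From mathcomp Require Import all_boot all_order all_algebra.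
From mathcomp Require Import all_classical all_reals all_analysis.
From mathcomp Require Import measurable_realfun ring lra.
Set Implicit Arguments. Unset Strict Implicit. Unset Printing Implicit Defensive.
Import Order.TTheory GRing.Theory Num.Theory.
Local Open Scope classical_set_scope.
Local Open Scope ring_scope.

Section StrictNeg.
Variables (R : realType) (I : finType).

Definition strict_neg (h : I -> R) : Prop :=
  (forall i, h i <= 0) /\ \sum_i h i < 0.

Lemma ltr_sum_pexpR (p u v : I -> R) :
  (forall i, 0 < p i) -> strict_neg (u \- v) ->
  \sum_i p i * expR (u i) < \sum_i p i * expR (v i).
Proof.
move=> p_gt0 [le_uv lt_sum].
have [i /andP[_ lt_vu]] : exists i, true && (0 < v i - u i).
  apply: psumr_neq0P => [j _|]; first by rewrite subr_ge0 -subr_le0 le_uv.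
  by rewrite sumrB; apply/eqP; rewrite subr_eq0 eq_sym lt_eqF // -subr_lt0 -sumrB.
rewrite [ltLHS](bigD1 i) // [ltRHS](bigD1 i) //= ltr_leD //.
  by rewrite ltr_pM2l // ltr_expR -subr_gt0.
apply: ler_sum => j _; rewrite ler_pM2l // ler_expR -subr_le0; exact: le_uv.
Qed.

End StrictNeg.

Lemma strict_neg3 (R : realType) (a b c : R) :
  a <= 0 -> b <= 0 -> c <= 0 -> a + b + c < 0 ->
  strict_neg (fun i : 'I_3 => [:: a; b; c]`_i).
Proof.
move=> a0 b0 c0 s0; split; first by case=> [[|[|[|//]]] ?].
by rewrite !big_ord_recr big_ord0 /= add0r.
Qed.

Section Model.
Variables (R : realType) (K : nat).
Implicit Types (x : 'M[R]_(K,3)) (beta d : 'rV[R]_K) (gamma g a : R).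

Lemma xbB x t beta beta' : xb x t (beta - beta') = xb x t beta - xb x t beta'.
Proof. by rewrite /xb -sumrB; apply: eq_bigr => k _; rewrite !mxE mulrBr. Qed.

Lemma xbN x t d : xb x t (- d) = - xb x t d.
Proof. by rewrite /xb -sumrN; apply: eq_bigr => k _; rewrite !mxE mulrN. Qed.

Lemma coord_order (a1 a2 a3 c : R) :
  (if 0 <= c then (a1 <= a3 < a2) \/ (a1 < a3 <= a2)
   else (a2 < a3 <= a1) \/ (a2 <= a3 < a1)) ->
  [/\ a1 * c <= a3 * c, a3 * c <= a2 * c & c != 0 -> a1 * c < a2 * c].
Proof.
case: ifP => [c_ge0|/negbT]; last rewrite -ltNge => c_lt0.
  by case=> /andP[h1 h2]; split=> [||c_neq0]; nra.
by case=> /andP[h1 h2]; split=> [||_]; nra.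
Qed.

Lemma Xs_sign_xb d x : Xs (fun k => 0 <= d 0 k) x ->
  [/\ xb x p1 d <= xb x p3 d, xb x p3 d <= xb x p2 d &
      d != 0 -> xb x p1 d < xb x p2 d].
Proof.
move=> Xx; have ord k := coord_order (Xx k).
split=> [||d_neq0]; try by apply: ler_sum => k _; case: (ord k).
have [k dk_neq0] : exists k, d 0 k != 0.
  apply/existsP; apply: contraNT d_neq0 => /existsPn dk0.
  by apply/eqP/rowP => k; rewrite mxE (eqP (negbNE (dk0 k))).
rewrite /xb (bigD1 k) // [ltRHS](bigD1 k) //= ltr_leD //.
  by case: (ord k) => _ _; apply.
by apply: ler_sum => j _; case: (ord j) => le13 le32 _; exact: le_trans le32.
Qed.

Lemma pt_gt0 (v : R) (b : bool) : 0 < pt v b.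
Proof.
have e_gt0 := expR_gt0 v; have den_gt0 : 0 < 1 + expR v by lra.
rewrite /pt /logistic; case: b; first exact: divr_gt0.
by rewrite subr_gt0 ltr_pdivrMr // mul1r ltrDr.
Qed.

Lemma condprob_gt0 beta gamma (y0 : bool) x a y1 y2 y3 :
  0 < condprob beta gamma y0 x a y1 y2 y3.
Proof. by rewrite /condprob !mulr_gt0 ?pt_gt0. Qed.

Variables (beta0 : 'rV[R]_K) (gamma0 : R).

Definition cexp_moment (y0 : bool) (xi : xi_t) x a beta gamma : R :=
  \sum_(y1 : bool) \sum_(y2 : bool) \sum_(y3 : bool)
    condprob beta0 gamma0 y0 x a y1 y2 y3 * moment y0 xi y1 y2 y3 x beta gamma.

Lemma cexp_moment_truth y0 xi x a : cexp_moment y0 xi x a beta0 gamma0 = 0.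
Proof.
rewrite /cexp_moment !big_bool /condprob /pt /logistic /b2r.
by case: y0; case: xi => /=; rewrite ?mul1r ?mul0r ?addr0 ?expRD ?expRN;
  field; rewrite ?lt0r_neq0 ?addr_gt0 ?mulr_gt0 ?expR_gt0.
Qed.

Definition moment_exponent (y0 : bool) (xi : xi_t) x beta gamma : 'I_3 -> R :=
  let b1 := xb x p1 beta in let b2 := xb x p2 beta in let b3 := xb x p3 beta in
  fun i => (match y0, xi with
            | false, Xi_a => [:: b1 - b2; b1 - b3 - gamma; b3 - b2]
            | false, Xi_b => [:: b2 - b3; b3 - b1; gamma + (b2 - b1)]
            | true, Xi_a => [:: b1 - b2 + gamma; b1 - b3; b3 - b2]
            | true, Xi_b => [:: b2 - b3; b3 - b1 - gamma; b2 - b1]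
            end)`_i.

(* The outcomes where m^(xi)_y0 has an exponential term, listed in the order
of [moment_exponent]; at every other outcome the moment is a constant. *)
Definition moment_cell (xi : xi_t) (i : 'I_3) : bool * bool * bool :=
  nth (false, false, false)
    (match xi with
     | Xi_a => [:: (false, true, false); (false, true, true); (true, true, false)]
     | Xi_b => [:: (false, false, true); (true, false, false); (true, false, true)]
     end) i.

Definition moment_weight (y0 : bool) (xi : xi_t) x a (i : 'I_3) : R :=
  let: (y1, y2, y3) := moment_cell xi i in condprob beta0 gamma0 y0 x a y1 y2 y3.

Lemma moment_weight_gt0 y0 xi x a i : 0 < moment_weight y0 xi x a i.
Proof. by rewrite /moment_weight; case: moment_cell => [[? ?] ?]; exact: condprob_gt0. Qed.

Lemma cexp_momentB y0 xi x a beta gamma beta' gamma' :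
  cexp_moment y0 xi x a beta gamma - cexp_moment y0 xi x a beta' gamma' =
  \sum_i moment_weight y0 xi x a i * expR (moment_exponent y0 xi x beta gamma i) -
  \sum_i moment_weight y0 xi x a i * expR (moment_exponent y0 xi x beta' gamma' i).
Proof.
rewrite /cexp_moment !big_bool !big_ord_recr !big_ord0 /=.
by rewrite /moment_weight /moment_exponent /moment_cell; case: y0; case: xi => /=; ring.
Qed.

Lemma moment_exponentB y0 xi x beta gamma beta' gamma' :
  moment_exponent y0 xi x beta gamma \- moment_exponent y0 xi x beta' gamma' =
  moment_exponent y0 xi x (beta - beta') (gamma - gamma').
Proof.
apply/funext => -[[|[|[|//]]] ?]; rewrite /moment_exponent !xbB;
  by case: y0; case: xi => /=; ring.
Qed.

Lemma moment_exponent_sign y0 xi d g : d != 0 \/ g != 0 ->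
  exists s, (forall x, Xs s x -> strict_neg (moment_exponent y0 xi x d g)) \/
            (forall x, Xs s x -> strict_neg (moment_exponent y0 xi x (- d) (- g))).
Proof.
(* The sign pattern is that of d or of -d, whichever makes the x-differences
agree in sign with the gamma term. *)
move=> nz; pose s_pos k := 0 <= d 0 k; pose s_neg k := 0 <= (- d) 0 k.
have on_pos x : Xs s_pos x -> [/\ xb x p1 d <= xb x p3 d, xb x p3 d <= xb x p2 d &
    d != 0 -> xb x p1 d < xb x p2 d] by exact: Xs_sign_xb.
have on_neg x : Xs s_neg x -> [/\ xb x p3 d <= xb x p1 d, xb x p2 d <= xb x p3 d &
    d != 0 -> xb x p2 d < xb x p1 d].
  by case/Xs_sign_xb; rewrite !xbN oppr_eq0 !lerN2 ltrN2.
have [g_ge0|g_lt0] := lerP 0 g; case: y0; case: xi;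
  [exists s_neg; right | exists s_neg; left | exists s_pos; left | exists s_pos; right
  |exists s_pos; left | exists s_pos; right | exists s_neg; right | exists s_neg; left];
  move=> x Xx; rewrite /moment_exponent ?xbN /=; apply: strict_neg3;
  (have [? ? lt_d] := on_pos x Xx) || (have [? ? lt_d] := on_neg x Xx);
  by case: nz => [/lt_d|]; lra.
Qed.

Lemma cexp_moment_sign y0 xi beta gamma : beta != beta0 \/ gamma != gamma0 ->
  exists s, (forall x a, Xs s x -> cexp_moment y0 xi x a beta gamma < 0) \/
            (forall x a, Xs s x -> 0 < cexp_moment y0 xi x a beta gamma).
Proof.
rewrite -subr_eq0 -[gamma == _]subr_eq0 => /(moment_exponent_sign y0 xi).
move=> [s [neg|pos]]; exists s; [left|right] => x a Xx;
  rewrite -(cexp_moment_truth y0 xi x a) -subr_lt0 cexp_momentB subr_lt0;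
  apply: ltr_sum_pexpR => [i|]; rewrite ?moment_weight_gt0 ?moment_exponentB //.
- exact: neg.
- by move: (pos x Xx); rewrite !opprB.
Qed.

End Model.

Section Integral.
Context d (T : measurableType d) (R : realType) (mu : {measure set T -> \bar R}).
Variable D : set T.
Hypotheses (mD : measurable D) (muD_gt0 : (0 < mu D)%E).

Lemma integral_gt0 (f : T -> R) : mu.-integrable D (fun w => (f w)%:E) ->
  (forall w, D w -> 0 < f w) -> (0 < \int[mu]_(w in D) (f w)%:E)%E.
Proof.
move=> f_int f_gt0; rewrite lt0e integral_ge0 ?andbT => [|w Dw]; last first.
  by rewrite lee_fin ltW ?f_gt0.
apply/eqP => int0.
have : (\int[mu]_(w in D) `|(f w)%:E| = 0)%E.
  rewrite -int0; apply: eq_integral => w /[1!inE] Dw.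
  by rewrite gee0_abs // lee_fin ltW // f_gt0.
case/(ae_eq_integral_abs mu mD (measurable_int _ f_int)) => N [mN N0 sub].
have DN : D `<=` N.
  move=> w Dw; apply: sub => /= /(_ Dw) /(congr1 fine) /= fw0.
  by move: (f_gt0 w Dw); rewrite fw0 ltxx.
have : (mu D <= mu N)%E := le_measure mu (mem_set mD) (mem_set mN) DN.
by rewrite N0 leNgt muD_gt0.
Qed.

Lemma fine_integral_neq0 (f : T -> R) : mu.-integrable D (fun w => (f w)%:E) ->
  (forall w, D w -> f w < 0) \/ (forall w, D w -> 0 < f w) ->
  fine (\int[mu]_(w in D) (f w)%:E)%E != 0.
Proof.
move=> f_int; rewrite fine_eq0 ?integrable_fin_num //.
case=> [f_lt0|f_gt0]; last by rewrite gt_eqF ?integral_gt0.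
rewrite -oppe_eq0 -integralN ?fin_num_adde_defr ?integrable_pos_fin_num //.
rewrite gt_eqF // (integral_gt0 (integrableN f_int)) // => w /f_lt0.
by rewrite oppr_gt0.
Qed.

End Integral.

Section Event.
Context (R : realType) (K : nat) d (Omega : measurableType d).
Variables (Y0 : Omega -> bool) (X : Omega -> 'M[R]_(K,3)).
Hypotheses (mY0 : measurable [set w | Y0 w])
  (mX : forall k t, measurable_fun setT (fun w => X w k t)).

Let measurable_bool (b : Omega -> bool) : measurable_fun setT b ->
  measurable [set w | b w].
Proof. by move=> mb; rewrite -[X in measurable X]setTI; exact: mb. Qed.

Lemma measurable_event y0 s : measurable (event Y0 X y0 s).
Proof.
have mle k t u : measurable_fun setT (fun w => X w k t <= X w k u).
  exact: measurable_fun_ler.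
have mlt k t u : measurable_fun setT (fun w => X w k t < X w k u).
  exact: measurable_fun_ltr.
rewrite (_ : event Y0 X y0 s = [set w | Y0 w = y0] `&`
    \bigcap_(k in setT) [set w | if s k then Xplus k (X w) else Xminus k (X w)]).
  apply: measurableI.
    case: y0; first exact: mY0.
    rewrite (_ : [set w | Y0 w = false] = ~` [set w | Y0 w]); first exact: measurableC.
    by apply/seteqP; split=> w /=; case: (Y0 w).
  apply: fin_bigcap_measurable => [|k _]; first exact: finite_finset.
  by case: (s k); apply: measurableU; apply: measurable_bool;
    apply: measurable_and; (apply: mle || apply: mlt).
by apply/seteqP; split=> w [Yw Xw]; split=> // k; [move=> _|]; exact: Xw.
Qed.

End Event.

Lemma cond_momentE (R : realType) (K : nat) d (Omega : measurableType d)
    (Y0 : Omega -> bool) (X : Omega -> 'M[R]_(K,3)) (A : Omega -> R)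
    beta0 gamma0 y0 xi beta gamma w : Y0 w = y0 ->
  cond_moment Y0 X A beta0 gamma0 y0 xi beta gamma w =
  cexp_moment beta0 gamma0 y0 xi (X w) (A w) beta gamma.
Proof. by rewrite /cond_moment => ->. Qed.

Theorem theorem1 (R : realType) (K : nat) (d : measure_display)
  (Omega : measurableType d) (P : probability Omega R)
  (Y0 : Omega -> bool) (X : Omega -> 'M[R]_(K,3)) (A : Omega -> R)
  (beta0 : 'rV[R]_K) (gamma0 : R) (y0 : bool) (xi : xi_t) :
  measurable [set w | Y0 w] ->
  (forall (k : 'I_K) (t : 'I_3), measurable_fun setT (fun w => X w k t)) ->
  measurable_fun setT A ->
  (forall s : 'I_K -> bool, (0 < P (event Y0 X y0 s))%E) ->
  (forall (s : 'I_K -> bool) (beta : 'rV[R]_K) (gamma : R),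
      P.-integrable (event Y0 X y0 s)
        (fun w => (cond_moment Y0 X A beta0 gamma0 y0 xi beta gamma w)%:E)) ->
  forall (beta : 'rV[R]_K) (gamma : R),
    (forall s : 'I_K -> bool,
        mbar P Y0 X A beta0 gamma0 y0 xi s beta gamma = 0) <->
    (beta = beta0 /\ gamma = gamma0).
Proof.
move=> mY0 mX _ P_gt0 m_int beta gamma; split=> [mbar0|[-> ->] s]; last first.
  rewrite /mbar integral0_eq ?mul0r // => w [Yw _].
  by rewrite cond_momentE // cexp_moment_truth.
have [//|nz] : (beta = beta0 /\ gamma = gamma0) \/ (beta != beta0 \/ gamma != gamma0).
  by case: eqVneq; case: eqVneq; auto.
have [s sign_s] := cexp_moment_sign y0 xi nz.
have mE := measurable_event mY0 mX y0 s.
have PE_gt0 : 0 < fine (P (event Y0 X y0 s)).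
  by rewrite fine_gt0 // P_gt0 (le_lt_trans (probability_le1 P mE)) ?ltry.
exfalso; move/eqP: (mbar0 s); rewrite /mbar mulf_eq0 invr_eq0 (gt_eqF PE_gt0) orbF.
apply/negP; apply: fine_integral_neq0 => //; first exact: P_gt0.
by case: sign_s => [neg|pos]; [left|right] => w [Yw Xw];
  rewrite cond_momentE //; [exact: neg|exact: pos].
Qed.
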